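(* Suppose there is a deterministic protocol solving Byzantine Broadcast with a value set containing $[N]$, tolerating $f$ faults, in which all honest processes decide within $T$ steps, and whose message and signature complexities are at most $mc$ and $sc$ in every execution (by relabeling, such a protocol exists with any prescribed process as broadcaster). Then for every $K\in\mathbb N$ there is a deterministic solution to the $K$-round Marker Problem tolerating $f$ faults, with $T$ steps per round and with message complexity at most $mc$ and signature complexity at most $sc$ per round.
   Context: Model. There are $N$ processes $P_1,\dots,P_N$; $[N]=\{1,\dots,N\}$. Time proceeds in discrete steps $t=0,1,2,\dots$ (synchronous network). At each step every process first receives all messages sent to it at the previous step, each together with the identity of its sender, and then may send messages to any processes; the behaviour of an honest process is given by its protocol, a deterministic function of its inputs and of all messages it has received so far. Communication is authenticated: a process $P_j$ can sign a string $m$, producing $(m)_{P_j}$; every sent message is signed by its sender; no process other than $P_j$ can produce a string containing $(m)_{P_j}$ unless it copied it from a message it received, except that corrupted processes can produce signatures of any corrupted process. An $f$-adversary knows all protocols and all inputs (including future inputs), chooses at time $0$ a set of at most $f$ processes to corrupt, and makes them behave arbitrarily subject to the signature rule; the other processes are honest and follow their protocol. $\mathcal H$ denotes the set of honest processes. A protocol tolerates $f$ faults if its required properties hold against every $f$-adversary. Message complexity = number of messages sent by honest processes; signature complexity = number of signatures contained in messages sent by honest processes, counted with multiplicity (each nested signature and each repetition counts). Byzantine Broadcast with value set $\mathcal V$ (a finite set containing $0$) and broadcaster $P_1$: at time $0$, $P_1$ receives an initial value $v_1\in\mathcal V$; each honest $P_n$ decides a value $d_n\in\mathcal V$ such that (consistency)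 all honest processes decide the same value, (validity) if $P_1$ is honest then every honest process decides $v_1$, (termination) every honest process decides in finite time. Marker Problem ($K$ rounds of $T$ steps). Time is divided into $K$ consecutive rounds of $T$ steps. At the end of each round every honest process decides either ''unmarked'' or ''marked, with previous marked process $d$'' where $d\in[N]\cup\{\perp\}$. The marked process $M$ of round $1$ is $P_1$ if $P_1\in\mathcal H$ and $\perp$ otherwise; the marked process of round $i+1$ is the honest process that decided ''marked'' at the end of round $i$, or $\perp$ if there is none. At the beginning of round $i$, if $M\neq\perp$, $M$ receives an input $I_i\in[N]$ (''send the marker to $P_{I_i}$''). Required at the end of every round $i$: (consistency) at most one honest process decides it is marked; (liveness) if $M\in\mathcal H$, $I_i=n$ and $P_n\in\mathcal H$, then $P_n$ decides it is marked with previous marked process $M$; (non-impersonation) if $M=\perp$ and an honest process decides it is marked with previous marked process $d$, then $d\notin\mathcal H$. The message/signature complexity per round counts messages/signatures sent by honest processes during one round. *)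

From HB Require Import structures.
From Stdlib Require List.
From mathcomp Require Import all_boot.
Set Implicit Arguments. Unset Strict Implicit. Unset Printing Implicit Defensive.

(* Processes are 'I_N; P_{k+1} is the ordinal k (so P_1 is ordinal 0).      *)

(* TSig p m is the signed string (m)_{P_p}.                                  *)
Inductive term (N : nat) : Type :=
| TData of nat
| TSig of 'I_N & term N
| TPair of term N & term N.
Arguments TData {N}.

Inductive subterm (N : nat) (u : term N) : term N -> Prop :=
| st_refl : subterm u u
| st_sig p t : subterm u t -> subterm u (TSig p t)
| st_pairl t1 t2 : subterm u t1 -> subterm u (TPair t1 t2)
| st_pairr t1 t2 : subterm u t2 -> subterm u (TPair t1 t2).

Fixpoint nsigs (N : nat) (t : term N) : nat :=
  match t with
  | TData _ => 0
  | TSig _ m => (nsigs m).+1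
  | TPair a b => nsigs a + nsigs b
  end.

(* an outgoing message: (receiver, content) *)
Definition msg_out N := ('I_N * term N)%type.
(* an incoming message: (authenticated sender, content) *)
Definition msg_in N := ('I_N * term N)%type.

Definition copied N (src : seq (seq (msg_in N))) (x : term N) : Prop :=
  exists s, List.In s src /\ exists m, List.In m s /\ subterm x m.2.

Definition sig_ok N (can_sign : 'I_N -> bool) (src : seq (seq (msg_in N)))
    (outs : seq (msg_out N)) : Prop :=
  forall o p x, List.In o outs -> subterm (TSig p x) o.2 ->
    can_sign p \/ copied src (TSig p x).

(* Traces. sent t n = messages sent by process n at step t.                 *)
Definition trace N := nat -> 'I_N -> seq (msg_out N).

(* messages received by n at step t (sent to n at step t-1) *)
Definition rcv N (sent : trace N) (n : 'I_N) (t : nat) : seq (msg_in N) :=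
  if t is t'.+1 then
    flatten [seq [seq (s, o.2) | o <- sent t' s & o.1 == n] | s <- enum 'I_N]
  else [::].

Definition hist N (sent : trace N) (n : 'I_N) (t : nat) : seq (seq (msg_in N)) :=
  [seq rcv sent n s | s <- iota 0 t.+1].

(* Corrupted processes (set C) behave arbitrarily subject to the signature
   rule: they may produce signatures of any corrupted process, and otherwise
   only copy signatures from messages they have received. *)
Definition adversary_ok N (C : {set 'I_N}) (sent : trace N) : Prop :=
  forall s t, s \in C -> sig_ok (fun p => p \in C) (hist sent s t) (sent t s).

Definition honest_msgs N (C : {set 'I_N}) (sent : trace N) (t : nat) : nat :=
  \sum_(n | n \notin C) size (sent t n).
Definition honest_sigs N (C : {set 'I_N}) (sent : trace N) (t : nat) : nat :=
  \sum_(n | n \notin C) sumn [seq nsigs o.2 | o <- sent t n].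

(* Byzantine Broadcast. Values are natural numbers in the finite value set
   V (a seq nat). The broadcaster gets input Some v1, others None.          *)
Record bb_protocol (N : nat) := BBProtocol {
  (* messages sent by process n at step t, given its input and the history
     of messages received at steps 0..t (a list of size t+1) *)
  bb_send : 'I_N -> option nat -> seq (seq (msg_in N)) -> seq (msg_out N);
  bb_dec : 'I_N -> option nat -> seq (seq (msg_in N)) -> option nat
}.

Definition bb_input N (p1 : 'I_N) (v1 : nat) (n : 'I_N) : option nat :=
  if n == p1 then Some v1 else None.

Definition bb_exec N (P : bb_protocol N) (p1 : 'I_N) (C : {set 'I_N}) (v1 : nat)
    (sent : trace N) : Prop :=
  adversary_ok C sent /\
  forall n t, n \notin C ->
    sent t n = bb_send P n (bb_input p1 v1 n) (hist sent n t).

(* decision of n made within T steps, i.e. from its view at step T *)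
Definition bb_decision N (P : bb_protocol N) (p1 : 'I_N) (v1 : nat)
    (sent : trace N) (T : nat) (n : 'I_N) : option nat :=
  bb_dec P n (bb_input p1 v1 n) (hist sent n T).

Definition bb_solves N (V : seq nat) (p1 : 'I_N) (f T mc sc : nat)
    (P : bb_protocol N) : Prop :=
  (forall n i h, sig_ok (fun p => p == n) h (bb_send P n i h)) /\
  forall (C : {set 'I_N}) (v1 : nat) (sent : trace N),
    #|C| <= f -> v1 \in V -> bb_exec P p1 C v1 sent ->
    [/\
        forall n, n \notin C ->
          exists2 d, bb_decision P p1 v1 sent T n = Some d & d \in V,
        forall n m, n \notin C -> m \notin C ->
          bb_decision P p1 v1 sent T n = bb_decision P p1 v1 sent T m,
        p1 \notin C -> forall n, n \notin C ->
          bb_decision P p1 v1 sent T n = Some v1,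
        forall t, \sum_(s < t) honest_msgs C sent s <= mc
      &
        forall t, \sum_(s < t) honest_sigs C sent s <= sc].

(* Rounds are numbered r = 0..K-1 (round r+1 of the paper);
   round r consists of steps r*T .. r*T+T-1. A decision is
   None = "unmarked", Some d = "marked with previous marked process d",
   where d = None stands for ⊥. *)
Record mk_protocol (N : nat) := MKProtocol {
  (* messages sent by n at step t given its history at steps 0..t; each
     entry is (input received at that step, messages received at it) *)
  mk_send : 'I_N -> seq (option 'I_N * seq (msg_in N)) -> seq (msg_out N);
  (* decision of n at the end of round r, given its history at steps
     0..(r+1)T-1 and the messages received at step (r+1)T *)
  mk_dec : 'I_N -> nat -> seq (option 'I_N * seq (msg_in N)) ->
           seq (msg_in N) -> option (option 'I_N)
}.

(* Mk r = the marked process of round r (None = ⊥); I r = input of round r.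
   The input I r is given at the beginning of round r (step r*T) to Mk r. *)
Definition mk_input N (K T : nat) (I : nat -> 'I_N) (Mk : nat -> option 'I_N)
    (n : 'I_N) (t : nat) : option 'I_N :=
  if [&& t %% T == 0, t %/ T < K & Mk (t %/ T) == Some n]
  then Some (I (t %/ T)) else None.

(* history of n at steps 0..t-1 *)
Definition mk_hist N (K T : nat) (I : nat -> 'I_N) (Mk : nat -> option 'I_N)
    (sent : trace N) (n : 'I_N) (t : nat) : seq (option 'I_N * seq (msg_in N)) :=
  [seq (mk_input K T I Mk n s, rcv sent n s) | s <- iota 0 t].

Definition mk_decision N (Q : mk_protocol N) (K T : nat) (I : nat -> 'I_N)
    (Mk : nat -> option 'I_N) (sent : trace N) (n : 'I_N) (r : nat)
    : option (option 'I_N) :=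
  mk_dec Q n r (mk_hist K T I Mk sent n (r.+1 * T)) (rcv sent n (r.+1 * T)).

(* an execution of Q: corrupted set C, inputs I, trace sent, and Mk the
   sequence of marked processes determined by the execution *)
Definition mk_exec N (Q : mk_protocol N) (p1 : 'I_N) (K T : nat)
    (C : {set 'I_N}) (I : nat -> 'I_N) (Mk : nat -> option 'I_N)
    (sent : trace N) : Prop :=
  [/\ adversary_ok C sent,
      forall n t, n \notin C ->
        sent t n = mk_send Q n (mk_hist K T I Mk sent n t.+1),
      Mk 0 = (if p1 \notin C then Some p1 else None)
    & forall r, Mk r.+1 =
        [pick n | (n \notin C) && (mk_decision Q K T I Mk sent n r != None)]].

Definition mk_solves N (p1 : 'I_N) (f K T mc sc : nat) (Q : mk_protocol N) : Prop :=
  (forall n h, sig_ok (fun p => p == n) (map snd h) (mk_send Q n h)) /\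
  forall (C : {set 'I_N}) (I : nat -> 'I_N) (Mk : nat -> option 'I_N)
         (sent : trace N),
    #|C| <= f -> mk_exec Q p1 K T C I Mk sent ->
    forall r, r < K ->
    [/\
        forall n m, n \notin C -> m \notin C ->
          mk_decision Q K T I Mk sent n r != None ->
          mk_decision Q K T I Mk sent m r != None -> n = m,
        forall M, Mk r = Some M -> I r \notin C ->
          mk_decision Q K T I Mk sent (I r) r = Some (Some M),
        Mk r = None -> forall n d, n \notin C ->
          mk_decision Q K T I Mk sent n r = Some (Some d) -> d \in C,
        \sum_(r * T <= s < r.+1 * T) honest_msgs C sent s <= mc
      &
        \sum_(r * T <= s < r.+1 * T) honest_sigs C sent s <= sc].

(* Given a protocol P solving Byzantine Broadcast with broadcaster P_1 in T
   steps, the marker protocol runs, in round r, one instance of P in which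
   the process b believed to hold the marker plays the broadcaster: the roles
   of P_1 and b are exchanged, b broadcasts the (encoded) target of the
   marker, and the target learns from the common decision that it is marked.
   Signatures of the instance are realised as real signatures of the round
   number together with the content, so that signatures of other rounds are
   useless in round r.

   The core is the
   simulation: from any execution of the marker protocol, round r yields a
   genuine execution of P with at most f corruptions, so the honest processes
   agree on the next marked process and inherit the complexity bounds of P.
   The degenerate case T = 0 forces N = 1 and is solved by a silent protocol. *)
From HB Require Import structures.
From mathcomp Require Import all_boot perm.
Set Implicit Arguments. Unset Strict Implicit. Unset Printing Implicit Defensive.

Section TermCountable.
Variable N : nat.

(* Strings are encoded as generic trees, which makes them a countType and in
   particular gives them a decidable equality, so that boolean membership
   [\in] can be used on messages. *)
Fixpoint term_to_tree (t : term N) : GenTree.tree nat :=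
  match t with
  | TData k => GenTree.Node 0 [:: GenTree.Leaf k]
  | TSig p m => GenTree.Node 1 [:: GenTree.Leaf (val p); term_to_tree m]
  | TPair a b => GenTree.Node 2 [:: term_to_tree a; term_to_tree b]
  end.

Fixpoint tree_to_term (x : GenTree.tree nat) : option (term N) :=
  match x with
  | GenTree.Node 0 [:: GenTree.Leaf k] => Some (TData k)
  | GenTree.Node 1 [:: GenTree.Leaf p; y] =>
      if insub p is Some p' then omap (TSig p') (tree_to_term y) else None
  | GenTree.Node 2 [:: y; z] =>
      if tree_to_term y is Some a then omap (TPair a) (tree_to_term z) else None
  | _ => None
  end.

Lemma term_to_treeK : pcancel term_to_tree tree_to_term.
Proof. by elim=> //= [p m -> | a -> b ->]; rewrite ?valK. Qed.

HB.instance Definition _ := Countable.copy (term N) (pcan_type term_to_treeK).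

End TermCountable.

Lemma InP (T : eqType) (x : T) (s : seq T) : reflect (List.In x s) (x \in s).
Proof.
elim: s => [|y s IH] /=; first by right.
rewrite in_cons; apply: (iffP orP) => [[/eqP->|/IH]|[->|/IH]]; by [left|right|left|right].
Qed.

Lemma copiedP N (src : seq (seq (msg_in N))) x :
  copied src x <-> exists2 L, L \in src & exists2 m, m \in L & subterm x m.2.
Proof.
split=> [[L [/InP HL [m [/InP Hm Hx]]]] | [L /InP HL [m /InP Hm Hx]]];
  by [exists L => //; exists m | exists L; split => //; exists m].
Qed.

Lemma flatten_enum_single (A : Type) (I : finType) (B : I -> seq A) z :
  (forall y, y != z -> B y = [::]) -> flatten [seq B y | y <- enum I] = B z.
Proof.
move=> Bz; rewrite /flatten foldrE big_map -(@big_pred1_eq _ [::] cat _ z B).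
rewrite big_mkcond [index_enum I]unlock -enumT; apply: eq_bigr => y _.
by case: eqVneq => // /Bz.
Qed.

Lemma subterm_dataE N (u : term N) k : subterm u (TData k) -> u = TData k.
Proof. by move=> H; inversion H. Qed.

Lemma subterm_sigE N (u : term N) p t :
  subterm u (TSig p t) -> u = TSig p t \/ subterm u t.
Proof. by move=> H; inversion H; auto. Qed.

Lemma subterm_pairE N (u : term N) a b :
  subterm u (TPair a b) -> [\/ u = TPair a b, subterm u a | subterm u b].
Proof. by move=> H; inversion H; [constructor 1 | constructor 2 | constructor 3]. Qed.

Section Embedding.
(* A Byzantine Broadcast instance run during round [r] of the marker protocol
   uses relabelled processes (the involution [sg]) and must not be fooled by
   signatures from other rounds.  A signature (x)_p of the instance is
   therefore realised as the real signature (r, x)_{sg p}: the round number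
   is signed together with the content. *)
Variables (N : nat) (sg : 'I_N -> 'I_N) (r : nat).
Hypothesis sgK : involutive sg.

Fixpoint embed (t : term N) : term N :=
  match t with
  | TData k => TData k
  | TSig p x => TSig (sg p) (TPair (TData r) (embed x))
  | TPair a b => TPair (embed a) (embed b)
  end.

Definition round_payload (z : term N) : option (term N) :=
  if z is TPair (TData r') y then (if r' == r then Some y else None) else None.

Lemma round_payloadP z y : round_payload z = Some y -> z = TPair (TData r) y.
Proof. by case: z => // -[] // r' y'; rewrite /round_payload; case: eqP => // -> [->]. Qed.

Fixpoint extract (t : term N) : term N :=
  match t with
  | TData k => TData k
  | TPair a b => TPair (extract a) (extract b)
  | TSig p z => match z with
      | TPair (TData r') y => if r' == r then TSig (sg p) (extract y) else extract z
      | _ => extract z end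
  end.

Fixpoint embedded (t : term N) : bool :=
  match t with
  | TData _ => true
  | TPair a b => embedded a && embedded b
  | TSig _ z => match z with
      | TPair (TData r') y => (r' == r) && embedded y
      | _ => false end
  end.

Lemma extract_sig p z : extract (TSig p z) =
  if round_payload z is Some y then TSig (sg p) (extract y) else extract z.
Proof. by case: z => // -[] // r' y /=; case: eqP. Qed.

Lemma embedded_sig p z : embedded (TSig p z) =
  if round_payload z is Some y then embedded y else false.
Proof. by case: z => // -[] // r' y /=; case: eqP. Qed.

Lemma embedK : cancel embed extract.
Proof. by elim=> //= [p x -> | a -> b ->]; rewrite ?eqxx ?sgK. Qed.

Lemma embedded_embed x : embedded (embed x).
Proof. by elim: x => //= [p x -> | a -> b ->]; rewrite ?eqxx. Qed.

Lemma extractK y : embedded y -> embed (extract y) = y.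
Proof.
elim: y => [k|p z IH|a IHa b IHb] //; last by move=> /= /andP[/IHa -> /IHb ->].
rewrite embedded_sig extract_sig; case Ez: (round_payload z) IH => [y|] // IH wy.
move: IH; rewrite (round_payloadP Ez) /= wy sgK => /(_ isT) [->] //.
Qed.

Lemma embedded_subterm u m : subterm u m -> embedded m -> embedded u.
Proof.
elim=> // [p t _ IH | t1 t2 _ IH | t1 t2 _ IH]; last 2 first.
- by case/andP => /IH.
- by case/andP => _ /IH.
rewrite embedded_sig; case Et: (round_payload t) => [y|] // wy.
by apply: IH; rewrite (round_payloadP Et) /= wy.
Qed.

Lemma subterm_extract q x m : subterm (TSig q x) (extract m) ->
  exists2 y, x = extract y & subterm (TSig (sg q) (TPair (TData r) y)) m.
Proof.
elim: m => [k | p z IH | a IHa b IHb].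
- by move/subterm_dataE.
- rewrite extract_sig; case Ez: (round_payload z) IH => [y|] IH; last first.
    by case/IH => y' -> Hy'; exists y' => //; apply: st_sig.
  have Ez' := round_payloadP Ez; case/subterm_sigE => [[-> ->] | Hs].
    by exists y; rewrite // sgK Ez'; apply: st_refl.
  have [|y' -> Hy'] := IH; first by rewrite Ez' /=; apply: st_pairr.
  by exists y' => //; apply: st_sig.
- case/subterm_pairE => [// | /IHa | /IHb] [y -> Hy]; exists y => //.
  + exact: st_pairl.
  + exact: st_pairr.
Qed.

Lemma extract_subterm q y m : subterm (TSig (sg q) (TPair (TData r) y)) m ->
  subterm (TSig q (extract y)) (extract m).
Proof.
elim: m => [k | p z IH | a IHa b IHb].
- by move/subterm_dataE.
- case/subterm_sigE => [[<- <-] | /IH Hs]; first by rewrite /= eqxx sgK; apply: st_refl.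
  rewrite extract_sig; case Ez: (round_payload z) Hs => [y'|] // Hs.
  apply: st_sig; move: Hs; rewrite (round_payloadP Ez) /=.
  by case/subterm_pairE => [// | /subterm_dataE | //].
- by case/subterm_pairE => [// | /IHa | /IHb]; [apply: st_pairl | apply: st_pairr].
Qed.

Lemma subterm_embed p w m : subterm (TSig p w) (embed m) ->
  exists q x, [/\ p = sg q, w = TPair (TData r) (embed x) & subterm (TSig q x) m].
Proof.
elim: m => [k | p' x IH | a IHa b IHb] /=.
- by move/subterm_dataE.
- case/subterm_sigE => [[-> ->] | /subterm_pairE [// | /subterm_dataE // | /IH]].
    by exists p', x; split => //; apply: st_refl.
  by case=> q [x' [-> -> Hs]]; exists q, x'; split => //; apply: st_sig.
- case/subterm_pairE => [// | /IHa | /IHb] [q [x [-> -> Hs]]]; exists q, x.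
  + by split => //; apply: st_pairl.
  + by split => //; apply: st_pairr.
Qed.

Lemma nsigs_embed x : nsigs (embed x) = nsigs x.
Proof. by elim: x => //= [p x -> | a -> b ->]. Qed.

End Embedding.

Section Traces.
Variable N : nat.
Implicit Types (sent : trace N) (n : 'I_N).

Lemma mem_rcv sent n t x c : ((x, c) \in rcv sent n t.+1) = ((n, c) \in sent t x).
Proof.
apply/flattenP/idP => [[l /mapP [y _ ->] /mapP [o]] | Hc].
  by rewrite mem_filter => /andP[/eqP <- Ho] [-> ->]; case: o Ho.
exists [seq (x, o.2) | o <- sent t x & o.1 == n].
  by apply/mapP; exists x; rewrite ?mem_enum.
by apply/mapP; exists (n, c); rewrite // mem_filter eqxx.
Qed.

Lemma rcv_from sent n t y :
  [seq m <- rcv sent n t.+1 | m.1 == y] = [seq (y, o.2) | o <- sent t y & o.1 == n].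
Proof.
rewrite filter_flatten -map_comp (@flatten_enum_single _ _ _ y) => [|x xy] /=.
  by rewrite filter_map (@eq_filter _ _ predT) ?filter_predT // => o /=; rewrite eqxx.
by rewrite filter_map (@eq_filter _ _ pred0) ?filter_pred0 // => o /=; apply/negbTE.
Qed.

Lemma copied_hist sent n t u : copied (hist sent n t) u <->
  exists s z c, [/\ s < t, (n, c) \in sent s z & subterm u c].
Proof.
rewrite copiedP; split => [[L /mapP [[|s] Hs ->] [[x c] Hm Hu]] | [s [z [c [Hs Hc Hu]]]]].
- by [].
- move: Hs Hm; rewrite mem_iota mem_rcv ltnS => Hs Hm; by exists s, x, c.
- exists (rcv sent n s.+1); first by apply/mapP; exists s.+1; rewrite // mem_iota.
  by exists (z, c); rewrite ?mem_rcv.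
Qed.

Lemma hist_ext (A B : trace N) n t :
  (forall s q, s < t -> A s q = B s q) -> hist A n t = hist B n t.
Proof.
move=> AB; apply/eq_in_map => -[|s] //; rewrite mem_iota ltnS => Hs /=.
by congr flatten; apply: eq_map => x; rewrite AB.
Qed.

Section Extension.
Variables (T : nat) (seed : trace N) (C : {set 'I_N})
  (step : 'I_N -> seq (seq (msg_in N)) -> seq (msg_out N)).

(* the k-th approximation, correct on the steps before k *)
Fixpoint extend_upto k : trace N :=
  if k is k'.+1 then fun j q =>
    if j < T then seed j q else
    if q \in C then [::] else step q (hist (extend_upto k') q j)
  else fun _ _ => [::].

Definition extend : trace N := fun j q => extend_upto j.+1 j q.

Lemma extend_upto_stable j k q : j < k -> extend_upto k j q = extend j q.
Proof.
elim/ltn_ind: j k q => j IH [|k] q // Hjk; rewrite /extend /=.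
do 2!case: ifP => // _; congr step; apply: hist_ext => s q' Hs.
by rewrite IH ?(leq_trans Hs Hjk) // IH.
Qed.

Lemma extendE j q : extend j q =
  if j < T then seed j q else if q \in C then [::] else step q (hist extend q j).
Proof.
rewrite {1}/extend /=; do 2!case: ifP => // _; congr step.
by apply: hist_ext => s q' Hs; apply: extend_upto_stable.
Qed.

End Extension.
End Traces.

Section MarkerProtocol.
Variables (N : nat) (hN : 0 < N) (T : nat) (P : bb_protocol N).
Local Notation z0 := (Ordinal hN).

Definition obs := (option 'I_N * seq (msg_in N))%type.

Definition relabel (b : 'I_N) : 'I_N -> 'I_N := tperm z0 b.

Lemma relabelK b : involutive (relabel b).
Proof. exact: tpermK. Qed.

Lemma relabel_inj b : injective (relabel b).
Proof. exact: perm_inj. Qed.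

Lemma relabel_eq0 b n : (relabel b n == z0) = (n == b).
Proof. by rewrite -[X in _ == X](tpermR z0 b) (inj_eq (@relabel_inj b)). Qed.

(* marker targets are broadcast as values: 0 means "no input" and k+1 stands
   for the ordinal k *)
Definition encode_target (i : option 'I_N) : nat := if i is Some k then k.+1 else 0.
Definition decode_target (d : option nat) : option 'I_N :=
  if d is Some k.+1 then insub k else None.

Lemma encode_targetK i : decode_target (Some (encode_target (Some i))) = Some i.
Proof. by rewrite /= valK. Qed.

Definition inst_rcv (b : 'I_N) (r : nat) (L : seq (msg_in N)) : seq (msg_in N) :=
  flatten [seq [seq (q, extract (relabel b) r m.2)
               | m <- L & (m.1 == relabel b q) && embedded r m.2] | q <- enum 'I_N].

Definition inst_hist (b : 'I_N) (r : nat) (G : nat -> obs) (j : nat)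
    : seq (seq (msg_in N)) :=
  [::] :: [seq inst_rcv b r (G (r * T + s)).2 | s <- iota 1 j].

Definition inst_input (b : 'I_N) (r : nat) (n : 'I_N) (G : nat -> obs) : option nat :=
  if n == b then Some (encode_target (G (r * T)).1) else None.

Definition inst_decision (n : 'I_N) (G : nat -> obs) (r : nat) (b : 'I_N) : option nat :=
  bb_dec P (relabel b n) (inst_input b r n G) (inst_hist b r G T).

Fixpoint leader (n : 'I_N) (G : nat -> obs) (r : nat) : 'I_N :=
  if r is r'.+1 then odflt z0 (decode_target (inst_decision n G r' (leader n G r')))
  else z0.

Definition marker_send (n : 'I_N) (G : nat -> obs) (t : nat) : seq (msg_out N) :=
  let r := t %/ T in let b := leader n G r in
  [seq (relabel b o.1, embed (relabel b) r o.2)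
  | o <- bb_send P (relabel b n) (inst_input b r n G) (inst_hist b r G (t %% T))].

Definition marker_dec (n : 'I_N) (G : nat -> obs) (r : nat) : option (option 'I_N) :=
  let b := leader n G r in
  if decode_target (inst_decision n G r b) == Some n then Some (Some b) else None.

Definition obs_of (h : seq obs) : nat -> obs := nth (None, [::]) h.

Definition marker_protocol : mk_protocol N :=
  MKProtocol (fun n h => marker_send n (obs_of h) (size h).-1)
             (fun n r h last => marker_dec n (obs_of (rcons h (None, last))) r).

Lemma inst_hist_ext b r G G' j :
  (forall s, 0 < s <= j -> (G (r * T + s)).2 = (G' (r * T + s)).2) ->
  inst_hist b r G j = inst_hist b r G' j.
Proof.
move=> GG'; congr cons; apply/eq_in_map => s.
by rewrite mem_iota add1n ltnS => Hs; rewrite GG'.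
Qed.

Lemma inst_input_ext b r n G G' : (G (r * T)).1 = (G' (r * T)).1 ->
  inst_input b r n G = inst_input b r n G'.
Proof. by rewrite /inst_input => ->. Qed.

Lemma leader_ext n G G' r : (forall i, i <= r * T -> G i = G' i) ->
  leader n G r = leader n G' r.
Proof.
elim: r => //= r IH GG'; have le_rT : r * T <= r.+1 * T by rewrite leq_mul2r leqnSn orbT.
rewrite /inst_decision IH => [|i Hi]; last by apply: GG'; apply: leq_trans le_rT.
rewrite (inst_input_ext _ _ (congr1 fst (GG' _ le_rT))) (@inst_hist_ext _ _ G G') //.
by move=> s /andP[_ Hs]; rewrite GG' // mulSn [T + _]addnC leq_add2l.
Qed.

Lemma marker_send_ext n G G' t : (forall i, i <= t -> G i = G' i) ->
  marker_send n G t = marker_send n G' t.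
Proof.
move=> GG'; have le_rT : t %/ T * T <= t by apply: leq_divM.
rewrite /marker_send (@leader_ext n G G') => [|i Hi]; last first.
  by apply: GG'; apply: leq_trans le_rT.
rewrite (inst_input_ext _ _ (congr1 fst (GG' _ le_rT))) (@inst_hist_ext _ _ G G') //.
by move=> s /andP[_ Hs]; rewrite GG' // [leqRHS](divn_eq t T) leq_add2l.
Qed.

Lemma marker_dec_ext n G G' r : 0 < T ->
  (forall i, i < r.+1 * T -> G i = G' i) ->
  (G (r.+1 * T)).2 = (G' (r.+1 * T)).2 ->
  marker_dec n G r = marker_dec n G' r.
Proof.
move=> T0 GG' Glast; have lt_rT : r * T < r.+1 * T by rewrite ltn_mul2r T0 ltnSn.
rewrite /marker_dec /inst_decision (@leader_ext n G G') => [|i Hi]; last first.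
  by apply: GG'; apply: leq_ltn_trans lt_rT.
rewrite (inst_input_ext _ _ (congr1 fst (GG' _ lt_rT))) (@inst_hist_ext _ _ G G') // => s.
case/andP=> _; rewrite leq_eqVlt => /orP[/eqP -> | Hs]; first by rewrite -mulSnr.
by rewrite GG' // mulSn [T + _]addnC ltn_add2l.
Qed.

Lemma mem_inst_rcv b r L m : m \in inst_rcv b r L ->
  exists2 m', m' \in L & embedded r m'.2 /\ m.2 = extract (relabel b) r m'.2.
Proof.
case/flattenP => l /mapP [q _ ->] /mapP [m' Hm' ->].
by move: Hm'; rewrite mem_filter => /andP[/andP[_ wm] Hm']; exists m'.
Qed.

Lemma copied_inst_hist b r G j q x : copied (inst_hist b r G j) (TSig q x) ->
  exists2 s, 0 < s <= j & exists2 m, m \in (G (r * T + s)).2 &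
    subterm (TSig (relabel b q) (TPair (TData r) (embed (relabel b) r x))) m.2.
Proof.
case/copiedP => L; rewrite inE => /orP[/eqP -> [] // | /mapP [s Hs ->]] [m /mem_inst_rcv].
case=> m' Hm' [wm ->] /(subterm_extract (relabelK b)) [y -> Hy].
exists s; first by rewrite mem_iota add1n ltnS in Hs.
exists m' => //; rewrite (extractK (@relabelK b)) //.
by move: (embedded_subterm Hy wm); rewrite embedded_sig /= eqxx.
Qed.

Lemma marker_send_sig
    (Hsig : forall n i h, sig_ok (fun p => p == n) h (bb_send P n i h)) n h o p w :
  o \in marker_send n (obs_of h) (size h).-1 -> subterm (TSig p w) o.2 ->
  (p = n /\ exists y, w = TPair (TData ((size h).-1 %/ T)) y) \/
  copied (map snd h) (TSig p w).
Proof.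
set t := (size h).-1; set r := t %/ T; set b := leader n (obs_of h) r.
case/mapP => o0 Ho0 -> /= /(subterm_embed) [q [x [-> -> Hq]]].
case: (Hsig _ _ _ _ _ _ (InP _ _ Ho0) Hq) => [/eqP -> | /copied_inst_hist [s Hs [m Hm Hsub]]].
  by left; split; [rewrite relabelK | eexists].
right; apply/copiedP; exists (obs_of h (r * T + s)).2; last by exists m.
case/andP: Hs => s_gt0 le_s; apply: map_f; apply: mem_nth.
have le_t : r * T + s <= t by rewrite [leqRHS](divn_eq t T) leq_add2l.
rewrite /t in le_t; case: (size h) le_t => [|k] /=; last by rewrite ltnS.
by rewrite leqn0 addn_eq0 (gtn_eqF s_gt0) andbF.
Qed.

End MarkerProtocol.
Arguments decode_target {N}.

Section Execution.
Variables (N : nat) (hN : 0 < N) (T : nat) (P : bb_protocol N) (K f mc sc : nat).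
Local Notation z0 := (Ordinal hN).
Variable V : seq nat.
Hypothesis T_gt0 : 0 < T.
Hypothesis P_solves : bb_solves V z0 f T mc sc P.
Hypothesis no_target_in_V : 0 \in V.
Hypothesis targets_in_V : forall n : 'I_N, n.+1 \in V.
Variables (C : {set 'I_N}) (I : nat -> 'I_N) (Mk : nat -> option 'I_N) (sent : trace N).
Hypothesis few_corrupt : #|C| <= f.
Hypothesis exec : mk_exec (marker_protocol hN T P) z0 K T C I Mk sent.

Let P_sig : forall n i h, sig_ok (fun p => p == n) h (bb_send P n i h) := P_solves.1.
Local Notation Q := (marker_protocol hN T P).

Definition observed (n : 'I_N) : nat -> obs N :=
  fun s => (mk_input K T I Mk n s, rcv sent n s).

Lemma obs_of_hist n t i : i < t -> obs_of (mk_hist K T I Mk sent n t) i = observed n i.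
Proof. by move=> lt_it; rewrite /obs_of (nth_map 0) ?size_iota // nth_iota. Qed.

Lemma hist_of_obs n t : map snd (mk_hist K T I Mk sent n t.+1) = hist sent n t.
Proof. by rewrite /mk_hist -map_comp. Qed.

Lemma sent_honest n t : n \notin C -> sent t n = marker_send hN T P n (observed n) t.
Proof.
case: exec => _ honest _ _ Hn; rewrite honest //= size_map size_iota /=.
by apply: marker_send_ext => i Hi; rewrite obs_of_hist.
Qed.

Lemma decision_honest n r :
  mk_decision Q K T I Mk sent n r = marker_dec hN T P n (observed n) r.
Proof.
rewrite /mk_decision /=; apply: marker_dec_ext => // [i lt_i|].
  by rewrite /obs_of nth_rcons size_map size_iota lt_i -/(obs_of _ i) obs_of_hist.
by rewrite /obs_of nth_rcons size_map size_iota ltnn eqxx.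
Qed.

Lemma marked_honest r M : Mk r = Some M -> M \notin C.
Proof.
case: exec => _ _ Mk0 MkS; case: r => [|r].
  by rewrite Mk0; case: ifP => // H [<-].
by rewrite MkS; case: pickP => // n /andP[Hn _] [<-].
Qed.

Lemma round_sig_fresh t z o p r' y : o \in sent t z ->
  subterm (TSig p (TPair (TData r') y)) o.2 -> p \notin C -> r' * T <= t.
Proof.
elim/ltn_ind: t z o => t IH z o Ho Hs Hp.
have from_copy : copied (hist sent z t) (TSig p (TPair (TData r') y)) -> r' * T <= t.
  case/copied_hist => s [z' [c [lt_st Hc Hsub]]].
  exact: leq_trans (IH s lt_st z' _ Hc Hsub Hp) (ltnW lt_st).
case: exec => adv honest _ _; case: (boolP (z \in C)) => Hz.
  by case: (adv z t Hz o p _ (InP _ _ Ho) Hs) => [Hp'|];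
    [rewrite Hp' in Hp | apply: from_copy].
rewrite honest // in Ho; case: (marker_send_sig P_sig Ho Hs).
  by rewrite size_map size_iota => -[_ [y' [-> _]]]; apply: leq_divM.
by rewrite hist_of_obs; apply: from_copy.
Qed.

Section Round.
(* From the real execution we
   build an execution [inst_trace] of [P] with broadcaster P_1: process q of
   the instance is the real process [sg q], the corrupted ones are the
   preimages of C, and steps after T are completed by running [P]. *)
Variables (r : nat) (b : 'I_N).
Hypothesis r_lt_K : r < K.
Hypothesis leader_common : forall n, n \notin C -> leader hN T P n (observed n) r = b.
Hypothesis marked_leader : forall M, Mk r = Some M -> M = b.
Local Notation sg := (relabel hN b).

Definition inst_corrupt : {set 'I_N} := sg @^-1: C.

Definition inst_value : nat :=
  encode_target (if Mk r is Some _ then Some (I r) else None).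

(* the instance messages of step j: decoded real messages of step rT + j;
   messages to corrupted processes are kept even when badly tagged, since
   corrupted processes may copy signatures out of them *)
Definition inst_seed : trace N := fun j q =>
  [seq (sg o.1, extract sg r o.2)
  | o <- sent (r * T + j) (sg q) & embedded r o.2 || (o.1 \in C)].

Definition inst_trace : trace N :=
  extend T inst_seed inst_corrupt (fun q H => bb_send P q (bb_input z0 inst_value q) H).

Lemma inst_seed_mem j z x c : j < T -> (x, c) \in sent (r * T + j) z ->
  embedded r c || (x \in C) -> (sg x, extract sg r c) \in inst_trace j (sg z).
Proof.
move=> lt_jT Hc wc; rewrite /inst_trace extendE lt_jT /inst_seed relabelK.
by apply/mapP; exists (x, c); rewrite // mem_filter wc.
Qed.

Lemma sent_in_round j n : n \notin C -> j < T ->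
  sent (r * T + j) n = [seq (sg o.1, embed sg r o.2) | o <-
     bb_send P (sg n) (inst_input T b r n (observed n)) (inst_hist hN T b r (observed n) j)].
Proof.
move=> Hn lt_jT; have rE : (r * T + j) %/ T = r by rewrite divnMDl // divn_small ?addn0.
by rewrite sent_honest // /marker_send rE modnMDl modn_small // leader_common.
Qed.

Lemma inst_trace_honest j n : n \notin C -> j < T ->
  inst_trace j (sg n) =
  bb_send P (sg n) (inst_input T b r n (observed n)) (inst_hist hN T b r (observed n) j).
Proof.
move=> Hn lt_jT; rewrite /inst_trace extendE lt_jT /inst_seed relabelK sent_in_round //.
elim: (bb_send _ _ _ _) => // o l IH /=.
by rewrite embedded_embed /= IH (embedK r (relabelK hN b)) relabelK; case: o.
Qed.

Lemma rcv_inst_trace s n : n \notin C -> 0 < s <= T ->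
  rcv inst_trace (sg n) s = inst_rcv hN b r (rcv sent n (r * T + s)).
Proof.
case: s => [|s] // Hn /andP[_ lt_sT]; rewrite addnS /rcv /inst_rcv.
congr flatten; apply: eq_map => x; rewrite /inst_trace extendE lt_sT /inst_seed.
have -> : [seq m <- rcv sent n (r * T + s).+1 | (m.1 == sg x) && embedded r m.2] =
    [seq m <- [seq (sg x, o.2) | o <- sent (r * T + s) (sg x) & o.1 == n] | embedded r m.2].
  by rewrite -rcv_from -filter_predI; apply: eq_filter => m; rewrite /= andbC.
elim: (sent _ (sg x)) => //= -[a c] l IH /=.
case: (eqVneq a n) => [-> | ne_an].
  by rewrite (negbTE Hn) orbF; case Ec: (embedded r c); rewrite /= ?Ec /= ?eqxx -IH.
by case: ifP => _; rewrite /= ?(inj_eq (@relabel_inj _ hN b)) ?(negbTE ne_an) IH.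
Qed.

Lemma hist_inst_trace j n : n \notin C -> j <= T ->
  hist inst_trace (sg n) j = inst_hist hN T b r (observed n) j.
Proof.
move=> Hn le_jT; congr cons; apply/eq_in_map => s.
rewrite mem_iota add1n ltnS => /andP[s_gt0 le_sj].
by rewrite rcv_inst_trace ?s_gt0 ?(leq_trans le_sj).
Qed.

Lemma inst_input_honest n : n \notin C ->
  inst_input T b r n (observed n) = bb_input z0 inst_value (sg n).
Proof.
move=> Hn; rewrite /inst_input /bb_input relabel_eq0; case: eqVneq => // ->.
rewrite /observed /mk_input modnMl mulnK // eqxx r_lt_K /inst_value.
by case EM: (Mk r) => [M|] //=; rewrite (marked_leader EM) eqxx.
Qed.

Lemma copied_in_round q t p y : t < T -> sg q \in C -> sg p \notin C ->
  copied (hist sent (sg q) (r * T + t)) (TSig (sg p) (TPair (TData r) y)) ->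
  copied (hist inst_trace q t) (TSig p (extract sg r y)).
Proof.
move=> lt_tT Hq Hp /copied_hist [s [z [c [lt_s Hc Hsub]]]].
have le_rs : r * T <= s := round_sig_fresh Hc Hsub Hp.
have lt_kt : s - r * T < t by rewrite ltn_subLR.
apply/(copied_hist inst_trace); exists (s - r * T), (sg z), (extract sg r c); split => //.
  rewrite -[q](relabelK hN b); apply: inst_seed_mem (ltn_trans lt_kt lt_tT) _ _.
    by rewrite subnKC.
  by rewrite Hq orbT.
exact: (@extract_subterm _ _ r (relabelK hN b) p y c Hsub).
Qed.

Lemma inst_trace_adversary : adversary_ok inst_corrupt inst_trace.
Proof.
move=> q t Hq o p x /InP; have HqC : sg q \in C by rewrite inE in Hq.
rewrite /inst_trace extendE; case: ifP => [lt_tT | _]; last by rewrite Hq.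
case/mapP => o0; rewrite mem_filter => /andP[_ Ho0] -> /=.
case/(subterm_extract (relabelK hN b)) => y -> Hy.
have [HpC | HpH] := boolP (sg p \in C); first by left; rewrite inE.
right; apply: copied_in_round => //; case: exec => adv _ _ _.
by case: (adv _ _ HqC o0 (sg p) _ (InP _ _ Ho0) Hy) => [HpC|//]; rewrite HpC in HpH.
Qed.

Lemma inst_trace_follows q t : q \notin inst_corrupt ->
  inst_trace t q = bb_send P q (bb_input z0 inst_value q) (hist inst_trace q t).
Proof.
move=> Hq; have Hn : sg q \notin C by rewrite inE in Hq.
case: (ltnP t T) => [lt_tT | le_Tt].
  rewrite -[q](relabelK hN b) inst_trace_honest // inst_input_honest //.
  by rewrite hist_inst_trace // ltnW.
by rewrite /inst_trace extendE ltnNge le_Tt /= (negbTE Hq).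
Qed.

Lemma inst_trace_exec : bb_exec P z0 inst_corrupt inst_value inst_trace.
Proof. by split; [exact: inst_trace_adversary | move=> q t; apply: inst_trace_follows]. Qed.

Lemma card_inst_corrupt : #|inst_corrupt| = #|C|.
Proof. exact/card_preimset/relabel_inj. Qed.

Lemma round_cost (F G : nat -> 'I_N -> nat) :
  (forall j n, j < T -> n \notin C -> F (r * T + j) n = G j (sg n)) ->
  \sum_(r * T <= s < r.+1 * T) \sum_(n | n \notin C) F s n =
  \sum_(s < T) \sum_(q | q \notin inst_corrupt) G s q.
Proof.
move=> FG; rewrite mulSnr -{1}[r * T]add0n big_addn addKn big_mkord.
apply: eq_bigr => j _; rewrite [RHS](reindex_inj (@relabel_inj _ hN b)) /=.
by apply: eq_big => [n | n Hn]; rewrite ?inE ?relabelK // addnC FG.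
Qed.

Lemma round_msgs : \sum_(r * T <= s < r.+1 * T) honest_msgs C sent s =
  \sum_(s < T) honest_msgs inst_corrupt inst_trace s.
Proof.
apply: (@round_cost (fun s n => size (sent s n)) (fun s q => size (inst_trace s q))).
by move=> j n lt_jT Hn; rewrite inst_trace_honest // sent_in_round // size_map.
Qed.

Lemma round_sigs : \sum_(r * T <= s < r.+1 * T) honest_sigs C sent s =
  \sum_(s < T) honest_sigs inst_corrupt inst_trace s.
Proof.
apply: (@round_cost (fun s n => sumn [seq nsigs o.2 | o <- sent s n])
                    (fun s q => sumn [seq nsigs o.2 | o <- inst_trace s q])).
move=> j n lt_jT Hn; rewrite inst_trace_honest // sent_in_round // -map_comp.
by congr sumn; apply: eq_map => o /=; rewrite nsigs_embed.
Qed.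

Lemma inst_decision_honest n : n \notin C ->
  inst_decision hN T P n (observed n) r b = bb_decision P z0 inst_value inst_trace T (sg n).
Proof.
by move=> Hn; rewrite /inst_decision /bb_decision inst_input_honest // hist_inst_trace.
Qed.

Lemma round_outcome : exists d,
  [/\ forall n, n \notin C -> inst_decision hN T P n (observed n) r b = Some d,
      b \notin C -> d = inst_value,
      \sum_(r * T <= s < r.+1 * T) honest_msgs C sent s <= mc
    & \sum_(r * T <= s < r.+1 * T) honest_sigs C sent s <= sc].
Proof.
have value_in : inst_value \in V by rewrite /inst_value; case: (Mk r) => [_|] /=.
have few : #|inst_corrupt| <= f by rewrite card_inst_corrupt.
have [decides agree valid msgs sigs] :=
  P_solves.2 _ _ _ few value_in inst_trace_exec.
have cost_msgs := msgs T; have cost_sigs := sigs T.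
rewrite -round_msgs in cost_msgs; rewrite -round_sigs in cost_sigs.
have honest_inst n : (sg n \notin inst_corrupt) = (n \notin C) by rewrite inE relabelK.
have [n0 Hn0 | all_corrupt] := pickP (fun n => n \notin C); last first.
  by exists inst_value; split => // n; rewrite all_corrupt.
have [d Hd _] := decides (sg n0) (etrans (honest_inst n0) Hn0).
exists d; split => // [n Hn | Hb].
  by rewrite inst_decision_honest // (agree _ (sg n0)) ?honest_inst // -inst_decision_honest.
have z0_honest : z0 \notin inst_corrupt by rewrite inE /relabel tpermL.
by have := valid z0_honest (sg n0); rewrite honest_inst Hn0 Hd => /(_ isT) [].
Qed.

End Round.

Lemma decision_in_round r b d n : n \notin C ->
  leader hN T P n (observed n) r = b ->
  inst_decision hN T P n (observed n) r b = Some d ->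
  mk_decision Q K T I Mk sent n r =
  if decode_target (Some d) == Some n then Some (Some b) else None.
Proof. by move=> Hn Hb Hd; rewrite decision_honest /marker_dec Hb Hd. Qed.

Lemma leader_agreement r : r <= K -> exists b,
  (forall n, n \notin C -> leader hN T P n (observed n) r = b) /\
  (forall M, Mk r = Some M -> M = b).
Proof.
elim: r => [_ | r IH lt_rK].
  by exists z0; split=> // M; case: exec => _ _ -> _; case: ifP => // _ [].
have [b [Hb HM]] := IH (ltnW lt_rK).
have [d [Hd _ _ _]] := round_outcome lt_rK Hb HM.
exists (odflt z0 (decode_target (Some d))); split => [n Hn | M].
  by rewrite /= Hb // Hd.
case: exec => _ _ _ ->; case: pickP => // n /andP[Hn].
rewrite (decision_in_round Hn (Hb n Hn) (Hd n Hn)).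
by case: (eqVneq (decode_target (Some d)) (Some n)) => [-> _ [<-] | //].
Qed.

Lemma round_correct r : r < K ->
  [/\ forall n m, n \notin C -> m \notin C ->
        mk_decision Q K T I Mk sent n r != None ->
        mk_decision Q K T I Mk sent m r != None -> n = m,
      forall M, Mk r = Some M -> I r \notin C ->
        mk_decision Q K T I Mk sent (I r) r = Some (Some M),
      Mk r = None -> forall n d, n \notin C ->
        mk_decision Q K T I Mk sent n r = Some (Some d) -> d \in C,
      \sum_(r * T <= s < r.+1 * T) honest_msgs C sent s <= mc
    & \sum_(r * T <= s < r.+1 * T) honest_sigs C sent s <= sc].
Proof.
move=> lt_rK; have [b [Hb HM]] := leader_agreement (ltnW lt_rK).
have [d [Hd valid msgs sigs]] := round_outcome lt_rK Hb HM.
have decision_r n (Hn : n \notin C) := decision_in_round Hn (Hb n Hn) (Hd n Hn).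
split => // [n m Hn Hm | M EM HI | EM n d' Hn].
- rewrite !decision_r //; case: (eqVneq (decode_target (Some d)) (Some n)) => [-> _ | //].
  by case: (eqVneq (Some n) (Some m)) => [[] | //].
- have Hbh : b \notin C by rewrite -(HM M EM) (marked_honest EM).
  by rewrite decision_r // valid // /inst_value EM encode_targetK eqxx (HM M EM).
- rewrite decision_r //; case: ifP => // /eqP dec_n [<-]; apply: contraT => Hbh.
  by move: dec_n; rewrite (valid Hbh) /inst_value EM.
Qed.

End Execution.

Lemma marker_protocol_solves N (hN : 0 < N) T (P : bb_protocol N) f mc sc (V : seq nat) K :
  0 < T -> 0 \in V -> (forall n : 'I_N, n.+1 \in V) ->
  bb_solves V (Ordinal hN) f T mc sc P ->
  mk_solves (Ordinal hN) f K T mc sc (marker_protocol hN T P).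
Proof.
move=> T_gt0 V0 VS P_solves; split=> [n h o p w /InP Ho Hs | C I Mk sent HC exec r lt_rK].
  by case: (marker_send_sig P_solves.1 Ho Hs) => [[-> _] | ]; [left | right].
exact: (round_correct T_gt0 P_solves V0 VS HC exec lt_rK).
Qed.

(* When T = 0 decisions are taken before any message is received, so
   validity forces a single process: a non-broadcaster would have to decide
   both values 0 and 1 from the same empty view. *)
Lemma bb_zero_steps_single N (hN : 0 < N) f mc sc (V : seq nat) (P : bb_protocol N) :
  0 \in V -> 1 \in V -> bb_solves V (Ordinal hN) f 0 mc sc P ->
  forall n : 'I_N, n = Ordinal hN.
Proof.
move=> V0 V1 P_solves n; apply/eqP/negPn/negP => ne_n0.
pose run v := extend 0 (fun _ _ => [::]) set0
  (fun q H => bb_send P q (bb_input (Ordinal hN) v q) H).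
have decides (v : nat) : v \in V -> bb_dec P n None [:: [::]] = Some v.
  move=> Vv; have exec : bb_exec P (Ordinal hN) set0 v (run v).
    by split=> [s t | q t _]; rewrite ?in_set0 // /run extendE /= in_set0.
  have none_corrupt : #|(set0 : {set 'I_N})| <= f by rewrite cards0.
  have [_ _ valid _ _] := P_solves.2 set0 v (run v) none_corrupt Vv exec.
  have := valid (negbT (in_set0 _)) n (negbT (in_set0 _)).
  by rewrite /bb_decision /bb_input (negbTE ne_n0).
by have := decides 0 V0; rewrite (decides 1 V1).
Qed.

Definition silent_protocol N (hN : 0 < N) : mk_protocol N :=
  MKProtocol (fun _ _ => [::]) (fun _ _ _ _ => Some (Some (Ordinal hN))).

(* With a single process and empty rounds, the silent protocol is correct:
   the only process is P_1, which is marked in every round while honest. *)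
Lemma silent_protocol_solves N (hN : 0 < N) f K mc sc :
  (forall n : 'I_N, n = Ordinal hN) ->
  mk_solves (Ordinal hN) f K 0 mc sc (silent_protocol hN).
Proof.
move=> single; split=> [n h o p x [] | C I Mk sent _ [_ _ Mk0 MkS] r _].
split=> [n m _ _ _ _ | M _ _ | EM n d Hn _ | |]; rewrite ?muln0 ?big_geq //.
- by rewrite (single n) (single m).
- by rewrite /mk_decision /= (single M).
exfalso; case: r EM => [|r]; first by rewrite Mk0 -(single n) Hn.
by rewrite MkS; case: pickP => // /(_ n); rewrite Hn.
Qed.

Theorem mainTheorem2 (N : nat) (hN : 0 < N) (f T mc sc : nat)
    (V : seq nat) (P : bb_protocol N) :
  0 \in V -> (forall n : 'I_N, n.+1 \in V) ->
  bb_solves V (Ordinal hN) f T mc sc P ->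
  forall K : nat, exists Q : mk_protocol N,
    mk_solves (Ordinal hN) f K T mc sc Q.
Proof.
move=> V0 VS P_solves K; have [T0 | T_gt0] := posnP T.
  subst T; exists (silent_protocol hN); apply: silent_protocol_solves.
  exact: bb_zero_steps_single V0 (VS (Ordinal hN)) P_solves.
by exists (marker_protocol hN T P); apply: marker_protocol_solves T_gt0 V0 VS P_solves.
Qed.
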